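(* Let $T$ be a complete theory with monster model $\mathcal{U}$, $\mu\in\mathfrak{M}_x(\mathcal{U})$, $\nu\in\mathfrak{M}_y(\mathcal{U})$, and $f:\mathcal{U}^y\to\mathcal{U}^z$ a definable map (with parameters). If $\mu\geq_{\mathbb{E}}\nu$, then $\mu\geq_{\mathbb{E}}f(\nu)$.
   Context: For $C\subseteq\mathcal{U}$, $\mathcal{L}_x(C)$ is the Boolean algebra of formulas in $x$ with parameters from $C$ modulo $T$, embedded in $\mathcal{L}_{xy}(C)$ via $\varphi(x)\mapsto\varphi(x)\wedge y=y$; $\mathfrak{M}_x(C)$ is the set of finitely additive probability measures on $\mathcal{L}_x(C)$. For $\omega\in\mathfrak{M}_{xy}(C)$, $\pi_x(\omega)(\varphi(x))=\omega(\varphi(x)\wedge y=y)$ (similarly $\pi_y$); $\omega|_D$ is restriction. The push-forward is $f(\nu)(\psi(z))=\nu(\psi(f(y)))$. For small $A$, $\mu\geq_{\mathbb{E},A}\nu$ means there is $\lambda\in\mathfrak{M}_{xy}(A)$ with $\pi_x(\lambda)=\mu|_A$ such that every $\omega\in\mathfrak{M}_{xy}(\mathcal{U})$ with $\omega|_A=\lambda$ and $\pi_x(\omega)=\mu$ satisfies $\pi_y(\omega)=\nu$; $\mu\geq_{\mathbb{E}}\nu$ means this holds for some small $A$ (defined analogously for other variable tuples). *)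

From mathcomp Require Import all_boot.
From Stdlib Require Import Reals.
From Stdlib Require List.

Set Implicit Arguments.
Unset Strict Implicit.
Unset Printing Implicit Defensive.

Record signature := Signature {
  fsym : Type; farity : fsym -> nat;
  rsym : Type; rarity : rsym -> nat }.

Record structure (L : signature) := Structure {
  carrier :> Type;
  finterp : forall f : fsym L, ('I_(farity f) -> carrier) -> carrier;
  rinterp : forall r : rsym L, ('I_(rarity r) -> carrier) -> Prop }.

Inductive term (L : signature) (P : Type) : Type :=
| tvar (i : nat)
| tpar (p : P)
| tapp (f : fsym L) (args : 'I_(farity f) -> term L P).

Inductive formula (L : signature) (P : Type) : Type :=
| feq (t1 t2 : term L P)
| frel (r : rsym L) (args : 'I_(rarity r) -> term L P)
| fneg (phi : formula L P)
| fand (phi psi : formula L P)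
| fex (i : nat) (phi : formula L P).

Section Semantics.
Variables (L : signature) (M : structure L).

Fixpoint eval_term (s : nat -> M) (t : term L M) : M :=
  match t with
  | tvar i => s i
  | tpar p => p
  | tapp f args => @finterp L M f (fun j => eval_term s (args j))
  end.

Definition upd (s : nat -> M) (i : nat) (a : M) : nat -> M :=
  fun j => if j == i then a else s j.

Fixpoint sat (s : nat -> M) (phi : formula L M) : Prop :=
  match phi with
  | feq t1 t2 => eval_term s t1 = eval_term s t2
  | frel r args => @rinterp L M r (fun j => eval_term s (args j))
  | fneg phi => ~ sat s phi
  | fand phi psi => sat s phi /\ sat s psi
  | fex i phi => exists a : M, sat (upd s i a) phi
  end.

Fixpoint tparams_in (A : M -> Prop) (t : term L M) : Prop :=
  match t with
  | tvar _ => True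
  | tpar p => A p
  | tapp f args => forall j, tparams_in A (args j)
  end.

Fixpoint fparams_in (A : M -> Prop) (phi : formula L M) : Prop :=
  match phi with
  | feq t1 t2 => tparams_in A t1 /\ tparams_in A t2
  | frel r args => forall j, tparams_in A (args j)
  | fneg phi => fparams_in A phi
  | fand phi psi => fparams_in A phi /\ fparams_in A psi
  | fex _ phi => fparams_in A phi
  end.

(** A subset X of M^n is definable over A: it is the set defined by a formula
    with parameters in A whose free variables are among 0..n-1 (variable i
    is the i-th coordinate). *)
Definition definable (n : nat) (A : M -> Prop) (X : ('I_n -> M) -> Prop) : Prop :=
  exists phi : formula L M, fparams_in A phi /\
    forall s : nat -> M, X (fun i : 'I_n => s (nat_of_ord i)) <-> sat s phi.

Definition setTM : M -> Prop := fun _ => True.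

(** * Monster model (kappa = |K|) *)

Definition small (K : Type) (A : M -> Prop) : Prop :=
  ~ exists g : K -> M, injective g /\ forall k, A (g k).

Definition saturated (K : Type) : Prop :=
  forall (A : M -> Prop), small K A ->
  forall (n : nat) (p : (('I_n -> M) -> Prop) -> Prop),
    (forall X, p X -> definable A X) ->
    (forall l : list (('I_n -> M) -> Prop),
        (forall X, List.In X l -> p X) ->
        exists a, forall X, List.In X l -> X a) ->
    exists a, forall X, p X -> X a.

Definition automorphism (sigma : M -> M) : Prop :=
  bijective sigma /\
  (forall f args, sigma (@finterp L M f args) = @finterp L M f (sigma \o args)) /\
  (forall r args, @rinterp L M r args <-> @rinterp L M r (sigma \o args)).

Definition strongly_homogeneous (K : Type) : Prop :=
  forall (I : Type) (a b : I -> M),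
    ~ (exists g : K -> I, injective g) ->
    (forall phi : formula L M, fparams_in (fun _ => False) phi ->
       forall g : nat -> I, sat (a \o g) phi <-> sat (b \o g) phi) ->
    exists sigma, automorphism sigma /\ forall i, sigma (a i) = b i.

Definition monster (K : Type) : Prop :=
  (exists g : nat -> K, injective g) /\ saturated K /\ strongly_homogeneous K.

Local Open Scope R_scope.

(* finitely additive probability measure on the Boolean algebra of
   C-definable subsets of M^n (= L_x(C), |x| = n, formulas modulo T) *)
Definition keisler (n : nat) (C : M -> Prop) (mu : (('I_n -> M) -> Prop) -> R) : Prop :=
  (forall X, definable C X -> 0 <= mu X) /\
  mu (fun _ => True) = 1 /\
  (forall X Y, definable C X -> definable C Y ->
     (forall a, X a <-> Y a) -> mu X = mu Y) /\
  (forall X Y, definable C X -> definable C Y ->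
     (forall a, ~ (X a /\ Y a)) ->
     mu (fun a => X a \/ Y a) = mu X + mu Y).

(* coordinates of M^(n+m): the first n are x, the last m are y *)
Definition xpart n m (a : 'I_(n + m) -> M) : 'I_n -> M := fun i => a (lshift m i).
Definition ypart n m (a : 'I_(n + m) -> M) : 'I_m -> M := fun j => a (rshift n j).

(* phi(x) /\ y = y   and   x = x /\ psi(y) *)
Definition cylx n m (X : ('I_n -> M) -> Prop) : ('I_(n + m) -> M) -> Prop :=
  fun a => X (xpart a).
Definition cyly n m (Y : ('I_m -> M) -> Prop) : ('I_(n + m) -> M) -> Prop :=
  fun a => Y (ypart a).

Definition keisler_ge_at (n m : nat) (A : M -> Prop)
    (mu : (('I_n -> M) -> Prop) -> R) (nu : (('I_m -> M) -> Prop) -> R) : Prop :=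
  exists lam : (('I_(n + m) -> M) -> Prop) -> R,
    keisler A lam /\
    (forall X, definable A X -> lam (@cylx n m X) = mu X) /\
    forall om : (('I_(n + m) -> M) -> Prop) -> R,
      keisler setTM om ->
      (forall Z, definable A Z -> om Z = lam Z) ->
      (forall X, definable setTM X -> om (@cylx n m X) = mu X) ->
      forall Y, definable setTM Y -> om (@cyly n m Y) = nu Y.

Definition keisler_ge (K : Type) (n m : nat)
    (mu : (('I_n -> M) -> Prop) -> R) (nu : (('I_m -> M) -> Prop) -> R) : Prop :=
  exists A : M -> Prop, small K A /\ keisler_ge_at A mu nu.

Definition definable_map (m k : nat) (f : ('I_m -> M) -> ('I_k -> M)) : Prop :=
  definable setTM (fun a : 'I_(m + k) -> M =>
    forall j : 'I_k, f (xpart a) j = ypart a j).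

Definition pushforward (m k : nat) (f : ('I_m -> M) -> ('I_k -> M))
    (nu : (('I_m -> M) -> Prop) -> R) : (('I_k -> M) -> Prop) -> R :=
  fun Y => nu (fun b => Y (f b)).

End Semantics.

(* Let [lam] over a small set [A] witness [mu >=_{E,A} nu], and let [A'] be [A] together
   with the finitely many parameters defining [f]; [A'] is still small because [K] is
   infinite.  First extend [lam], compatibly with [mu] on the cylinders [phi(x) /\ y = y],
   to a finitely additive probability [w0] on all subsets of [M^(x y)].  Its image [lam']
   under [g (x, y) = (x, f y)] witnesses [mu >=_{E,A'} f(nu)]: if a global [w'] extends
   [lam'] over [A'] and has [x]-marginal [mu], then [g^-1 Z |-> w' Z] is compatible with
   [lam]; a common extension [w] extends [lam] and has [x]-marginal [mu], hence
   [y]-marginal [nu], and [w' (W(z)) = w (W(f y)) = nu (W o f)].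
   Both extensions rest on the Horn-Tarski criterion: prescribed values [(X, v)] extend to
   a finitely additive probability on all sets if, whenever the indicator sums of two finite
   subfamilies are pointwise ordered, so are the sums of their values.  It is proved with
   Zorn's lemma, the value at a new set being the supremum of the lower bounds forced on it. *)

From Pilot Require Import Defs.
From mathcomp Require Import all_boot zify boolp classical_sets.
From Stdlib Require Import Reals Lra.

Set Implicit Arguments.
Unset Strict Implicit.
Unset Printing Implicit Defensive.

Local Open Scope classical_set_scope.

(** * Tuples and definable sets *)

Section Join.
Variable T : Type.

Definition join p q (x : 'I_p -> T) (y : 'I_q -> T) : 'I_(p + q) -> T :=
  fun i => match fintype.split i with inl a => x a | inr b => y b end.

Lemma join_lshift p q (x : 'I_p -> T) (y : 'I_q -> T) i : join x y (lshift q i) = x i.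
Proof. by rewrite /join (unsplitK (inl i)). Qed.

Lemma join_rshift p q (x : 'I_p -> T) (y : 'I_q -> T) j : join x y (rshift p j) = y j.
Proof. by rewrite /join (unsplitK (inr j)). Qed.

Lemma join_compl p q (x : 'I_p -> T) (y : 'I_q -> T) : join x y \o lshift q = x.
Proof. by apply: funext => i; rewrite /= join_lshift. Qed.

Lemma join_compr p q (x : 'I_p -> T) (y : 'I_q -> T) : join x y \o @rshift p q = y.
Proof. by apply: funext => j; rewrite /= join_rshift. Qed.

End Join.

Lemma join_comp (T U : Type) (g : T -> U) p q (x : 'I_p -> T) (y : 'I_q -> T) :
  g \o join x y = join (g \o x) (g \o y).
Proof. by apply: funext => i; rewrite /join /=; case: fintype.split. Qed.

Lemma join_inj p q r (s : 'I_p -> 'I_r) (t : 'I_q -> 'I_r) :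
  injective s -> injective t -> (forall i j, s i <> t j) -> injective (join s t).
Proof.
move=> s_inj t_inj st i j; rewrite /join.
case: splitP => a ia; case: splitP => b jb => E; apply: val_inj; rewrite /= ia jb.
- by rewrite (s_inj _ _ E).
- by case: (st _ _ E).
- by case: (st _ _ (esym E)).
- by rewrite (t_inj _ _ E).
Qed.

Section JoinParts.
Variables (L : signature) (M : structure L).

Lemma xpart_join p q (x : 'I_p -> M) (y : 'I_q -> M) : xpart (join x y) = x.
Proof. by apply: funext => i; rewrite /xpart join_lshift. Qed.

Lemma ypart_join p q (x : 'I_p -> M) (y : 'I_q -> M) : ypart (join x y) = y.
Proof. by apply: funext => j; rewrite /ypart join_rshift. Qed.

Lemma join_parts p q (a : 'I_(p + q) -> M) : join (xpart a) (ypart a) = a.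
Proof.
apply: funext => i; rewrite /join /xpart /ypart.
by case: splitP => j ij; congr a; apply: val_inj; rewrite /= ij.
Qed.

End JoinParts.

Section Syntax.
Variables (L : signature) (M : structure L).
Implicit Types (A : set M) (rho : nat -> nat) (s : nat -> M).

Fixpoint trename rho (t : term L M) : term L M :=
  match t with
  | tvar i => tvar L M (rho i)
  | tpar p => tpar L p
  | tapp f args => tapp (fun j => trename rho (args j))
  end.

Fixpoint frename rho (phi : formula L M) : formula L M :=
  match phi with
  | feq t1 t2 => feq (trename rho t1) (trename rho t2)
  | Defs.frel r args => Defs.frel (fun j => trename rho (args j))
  | fneg phi => fneg (frename rho phi)
  | fand phi psi => fand (frename rho phi) (frename rho psi)
  | fex i phi => fex (rho i) (frename rho phi)
  end.

Lemma eval_trename rho s t : eval_term s (trename rho t) = eval_term (s \o rho) t.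
Proof. by elim: t => [i|p|f args IH] //=; congr finterp; apply: funext => j; exact: IH. Qed.

Lemma upd_comp rho s i a : injective rho -> upd s (rho i) a \o rho = upd (s \o rho) i a.
Proof. by move=> rho_inj; apply: funext => j; rewrite /upd /= (inj_eq rho_inj). Qed.

Lemma sat_frename rho phi s : injective rho -> sat s (frename rho phi) <-> sat (s \o rho) phi.
Proof.
move=> rho_inj; elim: phi s => [t1 t2|r args|phi IH|phi IH psi IH'|i phi IH] s /=.
- by rewrite !eval_trename.
- suff -> : (fun j => eval_term s (trename rho (args j))) =
            (fun j => eval_term (s \o rho) (args j)) by [].
  by apply: funext => j; rewrite eval_trename.
- by rewrite IH.
- by rewrite IH IH'.
- by split=> -[a Ha]; exists a; move: Ha; rewrite IH upd_comp.
Qed.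

Lemma tparams_inS A A' t : A `<=` A' -> tparams_in A t -> tparams_in A' t.
Proof. by move=> AA'; elim: t => [i|p|f args IH] //=; [exact: AA' | move=> H j; exact: IH]. Qed.

Lemma fparams_inS A A' phi : A `<=` A' -> fparams_in A phi -> fparams_in A' phi.
Proof.
move=> AA'; elim: phi => [t1 t2|r args|phi IH|phi IH psi IH'|i phi IH] //=.
- by case=> h1 h2; split; exact: tparams_inS h1 || exact: tparams_inS h2.
- by move=> h j; exact: tparams_inS (h j).
- by case=> h1 h2; split; [exact: IH | exact: IH'].
Qed.

Lemma tparams_in_trename A rho t : tparams_in A t -> tparams_in A (trename rho t).
Proof. by elim: t => [i|p|f args IH] //= h j; exact: IH. Qed.

Lemma fparams_in_frename A rho phi : fparams_in A phi -> fparams_in A (frename rho phi).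
Proof.
elim: phi => [t1 t2|r args|phi IH|phi IH psi IH'|i phi IH] //=.
- by case=> h1 h2; split; exact: tparams_in_trename.
- by move=> h j; exact: tparams_in_trename.
- by case=> h1 h2; split; [exact: IH | exact: IH'].
Qed.

Fixpoint tparams (t : term L M) : seq M :=
  match t with
  | tvar _ => [::]
  | tpar p => [:: p]
  | tapp f args => flatten [seq tparams (args j) | j <- enum 'I_(farity f)]
  end.

Fixpoint fparams (phi : formula L M) : seq M :=
  match phi with
  | feq t1 t2 => tparams t1 ++ tparams t2
  | Defs.frel r args => flatten [seq tparams (args j) | j <- enum 'I_(rarity r)]
  | fneg phi => fparams phi
  | fand phi psi => fparams phi ++ fparams psi
  | fex _ phi => fparams phi
  end.

Lemma In_flatten_enum (I : finType) (F : I -> seq M) j p :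
  List.In p (F j) -> List.In p (flatten [seq F i | i <- enum I]).
Proof.
have : j \in enum I by rewrite mem_enum.
(* [List.in_or_app] applies to [cat] by conversion. *)
elim: (enum I) => [|i e IH] //=; rewrite in_cons => /orP [/eqP <-|/IH Fe] Fj.
  by apply: List.in_or_app; left.
by apply: List.in_or_app; right; apply: Fe.
Qed.

Lemma tparams_in_tparams t : tparams_in [set p | List.In p (tparams t)] t.
Proof.
elim: t => [i|p|f args IH] //=; first by left.
by move=> j; apply: tparams_inS (IH j) => p; exact: In_flatten_enum.
Qed.

Lemma fparams_in_fparams phi : fparams_in [set p | List.In p (fparams phi)] phi.
Proof.
elim: phi => [t1 t2|r args|phi IH|phi IH psi IH'|i phi IH] //=.
- split; [apply: tparams_inS (tparams_in_tparams t1) | apply: tparams_inS (tparams_in_tparams t2)];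
    by move=> p ?; apply: List.in_or_app; auto.
- by move=> j; apply: tparams_inS (tparams_in_tparams (args j)) => p; exact: In_flatten_enum.
- by split; [apply: fparams_inS IH | apply: fparams_inS IH'] => p ?; apply: List.in_or_app; auto.
Qed.

Fixpoint fexists (N k : nat) (phi : formula L M) : formula L M :=
  if k is k'.+1 then fex N (fexists N.+1 k' phi) else phi.

Definition upd_block s (N k : nat) (t : nat -> M) : nat -> M :=
  fun j => if (N <= j < N + k)%nat then t (j - N) else s j.

Lemma fparams_in_fexists A N k phi : fparams_in A phi -> fparams_in A (fexists N k phi).
Proof. by elim: k N => [|k IH] N //= /IH. Qed.

Lemma sat_fexists k N phi s : sat s (fexists N k phi) <-> exists t, sat (upd_block s N k t) phi.
Proof.
elim: k N s => [|k IH] N s /=.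
  have upd_block0 t : upd_block s N 0 t = s.
    by apply: funext => j; rewrite /upd_block addn0; case: ifP => //; lia.
  by split=> [h|[t]]; [exists s|]; rewrite upd_block0.
split=> [[a /IH [t ht]]|[t ht]].
  exists (fun j => if j == 0%nat then a else t j.-1); move: ht; congr sat.
  apply: funext => j; rewrite /upd_block /upd.
  by repeat case: ifP; move=> *; rewrite ?subnS //; lia.
exists (t 0%nat); apply/IH; exists (fun j => t j.+1); move: ht; congr sat.
apply: funext => j; rewrite /upd_block /upd.
by repeat case: ifP; move=> *; try lia; f_equal; lia.
Qed.

Definition restr p s : 'I_p -> M := fun i => s i.
Arguments restr p s _ : clear implicits.

Definition extend q (y : 'I_q -> M) s : nat -> M :=
  fun j => if insub j is Some i then y i else s j.

Lemma restr_extend q (y : 'I_q -> M) s : restr q (extend y s) = y.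
Proof. by apply: funext => i; rewrite /restr /extend valK. Qed.

Lemma restr_upd_block p q s t : restr (p + q) (upd_block s p q t) = join (restr p s) (restr q t).
Proof.
apply: funext => i; rewrite /restr /join /upd_block.
case: splitP => j ->; have := ltn_ord j => lt_j.
  by rewrite ifF //; apply/negbTE; lia.
by rewrite ifT; [congr t; lia | apply/andP; split; lia].
Qed.

End Syntax.

Arguments restr {L M} p s _.

Section Definability.
Variables (L : signature) (M : structure L).
Implicit Types (A : set M).

Lemma definableT n A : definable A (@setT ('I_n -> M)).
Proof. by exists (feq (tvar L M 0) (tvar L M 0)). Qed.

Lemma definableC n A (X : set ('I_n -> M)) : definable A X -> definable A (~` X).
Proof. by case=> phi [phiA phiX]; exists (fneg phi); split => // s /=; rewrite -phiX. Qed.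

Lemma definableI n A (X Y : set ('I_n -> M)) :
  definable A X -> definable A Y -> definable A (X `&` Y).
Proof.
case=> phi [phiA phiX] [psi [psiA psiY]].
by exists (fand phi psi); split => // s /=; rewrite -phiX -psiY.
Qed.

Lemma definableS n A A' (X : set ('I_n -> M)) : A `<=` A' -> definable A X -> definable A' X.
Proof. by move=> AA' [phi [phiA phiX]]; exists phi; split => //; exact: fparams_inS phiA. Qed.

Lemma definable_exists p q A (X : set ('I_(p + q) -> M)) :
  definable A X -> definable A [set x | exists y, X (join x y)].
Proof.
case=> phi [phiA phiX]; exists (fexists p q phi); split; first exact: fparams_in_fexists.
move=> s; rewrite sat_fexists; split=> [[y Xy]|[t /phiX]].
  exists (extend y s); apply/phiX; change (X (restr (p + q) (upd_block s p q (extend y s)))).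
  by rewrite restr_upd_block restr_extend.
move=> Xt; change (X (restr (p + q) (upd_block s p q t))) in Xt.
by rewrite restr_upd_block in Xt; exists (restr q t).
Qed.

Lemma definable_reindex p q A (sigma : 'I_p -> 'I_q) (X : set ('I_p -> M)) :
  injective sigma -> definable A X -> definable A [set a : 'I_q -> M | X (a \o sigma)].
Proof.
move=> sigma_inj [phi [phiA phiX]].
(* [rho] renames coordinate [i] to [sigma i] and moves every other variable beyond [q]. *)
pose rho j := if insub j is Some i then val (sigma i) else (j + q)%nat.
have rho_inj : injective rho.
  move=> j1 j2; rewrite /rho.
  case: insubP => [i1 _ <-|_]; case: insubP => [i2 _ <-|_] //.
  - by move/val_inj/sigma_inj ->.
  - by have := ltn_ord (sigma i1) => + E; rewrite E; lia.
  - by have := ltn_ord (sigma i2) => + E; rewrite -E; lia.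
  - by lia.
exists (frename rho phi); split; first exact: fparams_in_frename.
move=> s; rewrite sat_frename // -phiX /=.
suff -> : (fun i : 'I_p => (s \o rho) i) = (fun i => s (sigma i)) by [].
by apply: funext => i; rewrite /= /rho valK.
Qed.

End Definability.

(** * Small sets *)

Section DedekindInfinite.
Variables (K : Type) (e : nat -> K).
Hypothesis e_inj : injective e.

Lemma inj_nat_through k0 : exists c : nat -> K, injective c /\ exists j, c j = k0.
Proof.
case: (pselect (exists j, e j = k0)) => [ek0|ne]; first by exists e.
exists (fun i => if i is i'.+1 then e i' else k0); split; last by exists 0%nat.
case=> [|i1] [|i2] //= E.
- by case: ne; exists i2.
- by case: ne; exists i1.
- by rewrite (e_inj E).
Qed.

Lemma inj_avoid k0 : exists g : K -> K, injective g /\ forall k, g k <> k0.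
Proof.
have [c [c_inj [j cj]]] := inj_nat_through k0.
(* Hilbert's hotel along the chain [c]. *)
pose g k := if pselect (exists i, c i = k) is left h then c (proj1_sig (cid h) + j.+1)%nat else k.
have g_range i : g (c i) = c (i + j.+1)%nat.
  rewrite /g; case: pselect => [h|[]]; last by exists i.
  by case: cid => i' /= /c_inj ->.
have g_out k : ~ (exists i, c i = k) -> g k = k by rewrite /g; case: pselect.
exists g; split.
  move=> k1 k2; case: (pselect (exists i, c i = k1)) => [[i1 <-]|n1];
    case: (pselect (exists i, c i = k2)) => [[i2 <-]|n2].
  - by rewrite !g_range => /c_inj E; congr c; lia.
  - by rewrite g_range g_out // => E; case: n2; exists (i1 + j.+1)%nat.
  - by rewrite g_range g_out // => E; case: n1; exists (i2 + j.+1)%nat.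
  - by rewrite !g_out.
move=> k; rewrite -cj; case: (pselect (exists i, c i = k)) => [[i <-]|nk].
  by rewrite g_range => /c_inj; lia.
by rewrite g_out // => E; case: nk; exists j.
Qed.

End DedekindInfinite.

Section Small.
Variables (L : signature) (M : structure L) (K : Type).
Hypothesis K_infinite : exists e : nat -> K, injective e.

Lemma small_setU1 (A : set M) p : small K A -> small K (A `|` [set p]).
Proof.
move=> sA [h [h_inj hA]]; apply: sA.
case: (pselect (exists k0, h k0 = p)) => [[k0 hk0]|np]; last first.
  by exists h; split => // k; case: (hA k) => // hkp; case: np; exists k.
have [e e_inj] := K_infinite; have [g [g_inj g_k0]] := inj_avoid e_inj k0.
exists (h \o g); split; first exact: inj_comp.
move=> k; case: (hA (g k)) => // /= hgk; case: (g_k0 k); apply: h_inj.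
by rewrite hgk hk0.
Qed.

Lemma small_setU_seq (A : set M) (s : seq M) : small K A -> small K (A `|` [set p | List.In p s]).
Proof.
elim: s => [|p s IH] sA; first by rewrite (_ : [set p | _] = set0) ?setU0 //; apply/seteqP; split.
have -> : A `|` [set q | List.In q (p :: s)] = (A `|` [set q | List.In q s]) `|` [set p].
  apply/seteqP; split=> q /=; first by case=> [|[->|]]; auto.
  by case=> [[|]|->]; auto.
exact/small_setU1/IH.
Qed.

End Small.

(** * Extension of finitely additive probabilities *)

Local Open Scope R_scope.

Section Contents.
Variable U : Type.
Implicit Types (B : set (set U)) (m : set U -> R) (X Y Z S : set U).

Definition set_algebra B :=
  [/\ B setT, forall X, B X -> B (~` X) & forall X Y, B X -> B Y -> B (X `&` Y)].

Definition prob_content B m :=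
  [/\ m setT = 1, forall X, B X -> 0 <= m X &
      forall X Y, B X -> B Y -> X `&` Y = set0 -> m (X `|` Y) = m X + m Y].

Lemma set_algebra_setT : set_algebra (@setT (set U)).
Proof. by []. Qed.

Section Algebra.
Variable B : set (set U).
Hypothesis hB : set_algebra B.

Lemma set_algebraT : B setT. Proof. by case: hB. Qed.
Lemma set_algebraC X : B X -> B (~` X). Proof. by case: hB => _ + _; apply. Qed.
Lemma set_algebraI X Y : B X -> B Y -> B (X `&` Y). Proof. by case: hB => _ _; apply. Qed.

Lemma set_algebra0 : B set0.
Proof. by rewrite -setCT; apply/set_algebraC/set_algebraT. Qed.

Lemma set_algebraD X Y : B X -> B Y -> B (X `\` Y).
Proof. by move=> BX BY; rewrite setDE; apply: set_algebraI => //; apply: set_algebraC. Qed.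

Lemma set_algebraU X Y : B X -> B Y -> B (X `|` Y).
Proof.
move=> BX BY; rewrite -[X `|` Y]setCK setCU.
by apply/set_algebraC/set_algebraI; apply: set_algebraC.
Qed.

Variable m : set U -> R.
Hypothesis hm : prob_content B m.

Lemma content0 : m set0 = 0.
Proof.
case: hm => _ _ mU; have := mU _ _ set_algebra0 set_algebra0 (setI0 set0).
by rewrite setU0; lra.
Qed.

Lemma contentC X : B X -> m (~` X) = 1 - m X.
Proof.
case: hm => mT _ mU BX.
have := mU _ _ BX (set_algebraC BX) (setICr X); rewrite setUv; lra.
Qed.

Lemma le_content X Y : B X -> B Y -> X `<=` Y -> m X <= m Y.
Proof.
case: hm => _ m0 mU BX BY XY.
have := mU _ _ BX (set_algebraD BY BX) (setDIK X Y); rewrite setDUK //.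
have := m0 _ (set_algebraD BY BX); lra.
Qed.

Lemma content_setI_full Z S : B Z -> B S -> m S = 1 -> m (Z `&` S) = m Z.
Proof.
case: hm => _ m0 mU BZ BS mS.
have BZS := set_algebraI BZ BS; have BZnS := set_algebraD BZ BS.
have := mU _ _ BZS BZnS; rewrite setUIDK => -> //; last first.
  by apply/disjoints_subset => u [_ Su] [].
have := le_content BZnS (set_algebraC BS) (@subDsetr _ _ _).
have := m0 _ BZnS; rewrite contentC //; lra.
Qed.

Lemma contentU X Y : B X -> B Y -> m (X `|` Y) = m X + m Y - m (X `&` Y).
Proof.
case: hm => _ _ mU BX BY.
have BYnX := set_algebraD BY BX.
have := mU _ _ BX BYnX (setDIK X Y); rewrite setUDr setDv setD0.
have YXnX : Y `&` X `&` (Y `\` X) = set0 by apply/disjoints_subset => u [_ Xu] [].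
have := mU _ _ (set_algebraI BY BX) BYnX YXnX; rewrite setUIDK (setIC Y X); lra.
Qed.

End Algebra.
End Contents.

Section Multiplicity.
Variable U : Type.
Implicit Types (l : seq (set U)) (X : set U) (u : U).

Definition mult l u : nat := count (fun X => u \in X) l.

Definition level l (k : nat) : set U := [set u | (k <= mult l u)%nat].

Lemma mult_cat l1 l2 u : mult (l1 ++ l2) u = (mult l1 u + mult l2 u)%nat.
Proof. exact: count_cat. Qed.

Lemma mult_le_size l u : (mult l u <= size l)%nat.
Proof. exact: count_size. Qed.

Lemma level0 l : level l 0 = setT.
Proof. by apply/seteqP; split. Qed.

Lemma level_gt_size l k : (size l < k)%nat -> level l k = set0.
Proof.
move=> lt_l_k; apply/seteqP; split=> // u; rewrite /level /=.
have := mult_le_size l u; lia.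
Qed.

Lemma levelS_sub l k : level l k.+1 `<=` level l k.
Proof. by move=> u; rewrite /level /=; lia. Qed.

Lemma level_cons X l k : level (X :: l) k.+1 = level l k.+1 `|` (level l k `&` X).
Proof.
apply/seteqP; split=> u; rewrite /level /mult /=; case: (boolP (u \in X)) => Xu /=.
- case: (leqP k.+1 (count (fun X => u \in X) l)) => ? ?; first by left.
  by right; split; [lia | exact: set_mem].
- by left; lia.
- by case=> [|[]]; lia.
- by case=> [//|[_ /mem_set]]; rewrite (negbTE Xu).
Qed.

Lemma set_algebra_level B l k : set_algebra B -> all (mem B) l -> B (level l k).
Proof.
move=> hB; elim: l k => [|X l IH] [|k] Bl; rewrite ?level0; try exact: set_algebraT hB.
  by rewrite level_gt_size //; exact: set_algebra0.
case/andP: Bl => /set_mem BX {}/IH Bl.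
by rewrite level_cons; apply: set_algebraU hB _ _ (Bl _) (set_algebraI hB (Bl _) BX).
Qed.

End Multiplicity.

Fixpoint sumR (s : seq R) : R := if s is x :: s' then x + sumR s' else 0.

Lemma sumR_cat s1 s2 : sumR (s1 ++ s2) = sumR s1 + sumR s2.
Proof. elim: s1 => [|x s IH] /=; lra. Qed.

Fixpoint sum_upto (N : nat) (F : nat -> R) : R :=
  if N is N'.+1 then sum_upto N' F + F N' else 0.

Lemma sum_uptoD N F G : sum_upto N (fun k => F k + G k) = sum_upto N F + sum_upto N G.
Proof. elim: N => [|N IH] /=; lra. Qed.

Lemma sum_upto_telescope N (d : nat -> R) : sum_upto N (fun k => d k - d k.+1) = d 0%nat - d N.
Proof. elim: N => [|N IH] /=; lra. Qed.

Lemma le_sum_upto N F G : (forall k, F k <= G k) -> sum_upto N F <= sum_upto N G.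
Proof. by move=> FG; elim: N => [|N IH] /=; [lra | have := FG N; lra]. Qed.

Section LayerCake.
Variables (U : Type) (B : set (set U)) (m : set U -> R).
Hypotheses (hB : set_algebra B) (hm : prob_content B m).

Lemma content_level_cons X l k : B X -> all (mem B) l ->
  m (level (X :: l) k.+1) = m (level l k.+1) + m (level l k `&` X) - m (level l k.+1 `&` X).
Proof.
move=> BX Bl; have Blev j := set_algebra_level j hB Bl.
have BlevX : B (level l k `&` X) := set_algebraI hB (Blev k) BX.
rewrite level_cons (contentU hB hm (Blev _) BlevX).
by rewrite setIA (setIidl (@levelS_sub _ l k)).
Qed.

Lemma layer_cake l N : all (mem B) l -> (size l <= N)%nat ->
  sumR (map m l) = sum_upto N (fun k => m (level l k.+1)).
Proof.
elim: l => [|X l IH] Bl /= size_l.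
  have -> : (fun k => m (level [::] k.+1)) = (fun _ => 0).
    by apply: funext => k; rewrite level_gt_size // (content0 hB hm).
  by elim: N {size_l} => [|N IHN] /=; lra.
case/andP: Bl => /set_mem BX Bl.
pose d k := m (level l k `&` X).
have -> : (fun k => m (level (X :: l) k.+1)) = (fun k => m (level l k.+1) + (d k - d k.+1)).
  by apply: funext => k; rewrite content_level_cons //; rewrite /d; lra.
rewrite sum_uptoD sum_upto_telescope -IH //; last by lia.
rewrite /d level0 setTI level_gt_size; last by lia.
by rewrite set0I (content0 hB hm); lra.
Qed.

End LayerCake.

Section HornTarski.
Variable U : Type.
Implicit Types (B : set (set U)) (m : set U -> R) (G : set (set U * R)).

Definition wsum (ls : seq (set U * R)) : R := sumR (map snd ls).

Definition horn_tarski G := forall ls lt, all (mem G) ls -> all (mem G) lt ->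
  (forall u, mult (map fst ls) u <= mult (map fst lt) u)%nat -> wsum ls <= wsum lt.

Definition graph_on B m : set (set U * R) := [set x | B x.1 /\ x.2 = m x.1].

Lemma mult_setC (l : seq (set U)) u : (mult (map setC l) u + mult l u)%nat = size l.
Proof.
elim: l => [|X l IH] //=; rewrite /mult /= in_setC in IH *.
by case: (u \in X) => /=; lia.
Qed.

Lemma mult_nseq_setT p u : mult (nseq p (@setT U)) u = p.
Proof. by rewrite /mult count_nseq /= in_setT mul1n. Qed.

Lemma all_setC B l : set_algebra B -> all (mem B) l -> all (mem B) (map setC l).
Proof.
by move=> hB; rewrite all_map; apply: sub_all => X /set_mem /(set_algebraC hB) /mem_set.
Qed.

Lemma all_nseq_setT B p : set_algebra B -> all (mem B) (nseq p setT).
Proof. by move=> hB; rewrite all_nseq; apply/orP; right; exact: mem_set (set_algebraT hB). Qed.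

Lemma mult_flatten_nseq n (ls : seq (set U * R)) u :
  mult (map fst (flatten (nseq n ls))) u = (n * mult (map fst ls) u)%nat.
Proof. by elim: n => [|n IH] //=; rewrite map_cat mult_cat IH mulSn. Qed.

Lemma wsum_cons x ls : wsum (x :: ls) = x.2 + wsum ls.
Proof. by []. Qed.

Lemma wsum_cat ls lt : wsum (ls ++ lt) = wsum ls + wsum lt.
Proof. by rewrite /wsum map_cat sumR_cat. Qed.

Lemma wsum_flatten_nseq n ls : wsum (flatten (nseq n ls)) = INR n * wsum ls.
Proof.
elim: n => [|n IH]; first by rewrite /wsum /=; lra.
by rewrite S_INR /= wsum_cat IH; lra.
Qed.

Lemma all_flatten_nseq G n ls : all (mem G) ls -> all (mem G) (flatten (nseq n ls)).
Proof. by move=> Gls; elim: n => [|n IH] //=; rewrite all_cat Gls. Qed.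

Section Content.
Variables (B : set (set U)) (m : set U -> R).
Hypotheses (hB : set_algebra B) (hm : prob_content B m).

Lemma sum_content_setC l : all (mem B) l ->
  sumR (map m (map setC l)) = INR (size l) - sumR (map m l).
Proof.
elim: l => [|X l IH]; first by rewrite /=; lra.
case/andP => /set_mem BX /IH {}IH.
rewrite [size _]/= S_INR /= IH (contentC hB hm) //; lra.
Qed.

Lemma sum_content_nseq_setT p : sumR (map m (nseq p setT)) = INR p.
Proof. by case: hm => mT _ _; elim: p => [|p IH] //; rewrite S_INR -IH /= mT; lra. Qed.

End Content.

Section TwoContents.
Variables (B1 B2 : set (set U)) (m1 m2 : set U -> R).
Hypotheses (hB1 : set_algebra B1) (hB2 : set_algebra B2).
Hypotheses (hm1 : prob_content B1 m1) (hm2 : prob_content B2 m2).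
Hypothesis compat : forall X Y, B1 X -> B2 Y -> X `<=` Y -> m1 X <= m2 Y.

Lemma le_sum_contents l1 l2 : all (mem B1) l1 -> all (mem B2) l2 ->
  (forall u, mult l1 u <= mult l2 u)%nat -> sumR (map m1 l1) <= sumR (map m2 l2).
Proof.
move=> Bl1 Bl2 le_mult.
rewrite (layer_cake hB1 hm1 (N := size l1 + size l2) Bl1); last by lia.
rewrite (layer_cake hB2 hm2 (N := size l1 + size l2) Bl2); last by lia.
apply: le_sum_upto => k; apply: compat; try exact: set_algebra_level.
by move=> u; rewrite /level /=; have := le_mult u; lia.
Qed.

Lemma graphU_split ls : all (mem (graph_on B1 m1 `|` graph_on B2 m2)) ls ->
  exists l1 l2, [/\ all (mem B1) l1, all (mem B2) l2,
    forall u, mult (map fst ls) u = (mult l1 u + mult l2 u)%nat &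
    wsum ls = sumR (map m1 l1) + sumR (map m2 l2)].
Proof.
elim: ls => [_|[X v] ls IH /andP [/set_mem hX /IH [l1 [l2 [Bl1 Bl2 hmult hsum]]]]].
  by exists [::], [::]; split => //; rewrite /wsum /=; lra.
case: hX => [[/= BX ->]|[/= BX ->]].
- exists (X :: l1), l2; split => //=; first by rewrite (mem_set BX).
    by move=> u; rewrite hmult; lia.
  by rewrite wsum_cons hsum /=; lra.
- exists l1, (X :: l2); split => //=; first by rewrite (mem_set BX).
    by move=> u; rewrite hmult; lia.
  by rewrite wsum_cons hsum /=; lra.
Qed.

(* Complements move the [B2]-part of [ls] and the [B1]-part of [lt] to the other side,
   which reduces the claim to [le_sum_contents]. *)
Lemma horn_tarski_graphU : horn_tarski (graph_on B1 m1 `|` graph_on B2 m2).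
Proof.
move=> ls lt /graphU_split [a1 [a2 [Ba1 Ba2 ma ->]]].
move=> /graphU_split [b1 [b2 [Bb1 Bb2 mb ->]]] le_mult.
pose l1 := a1 ++ map setC b1 ++ nseq (size a2) setT.
pose l2 := b2 ++ map setC a2 ++ nseq (size b1) setT.
have Bl1 : all (mem B1) l1 by rewrite !all_cat Ba1 all_setC // all_nseq_setT.
have Bl2 : all (mem B2) l2 by rewrite !all_cat Bb2 all_setC // all_nseq_setT.
have le_mult12 u : (mult l1 u <= mult l2 u)%nat.
  rewrite !mult_cat !mult_nseq_setT; have := le_mult u; rewrite ma mb.
  by have := mult_setC b1 u; have := mult_setC a2 u; lia.
have := le_sum_contents Bl1 Bl2 le_mult12; rewrite !map_cat !sumR_cat.
rewrite (sum_content_setC hB1 hm1) // (sum_content_setC hB2 hm2) //.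
rewrite (sum_content_nseq_setT hm1) (sum_content_nseq_setT hm2); lra.
Qed.

End TwoContents.
End HornTarski.

Section OneStepExtension.
Variables (U : Type) (A : set (set U * R)) (e : set U).
Hypotheses (hA : horn_tarski A) (hAT : A (setT, 1)).

(* [r] is a lower (resp. upper) bound that [A] forces on the value of [e]. *)
Definition lower_value r := exists p ls lt, [/\ (0 < p)%nat, all (mem A) ls, all (mem A) lt,
  forall u, (mult (map fst ls) u <= p * (u \in e) + mult (map fst lt) u)%nat &
  r * INR p = wsum ls - wsum lt].

Definition upper_value r := exists p ls lt, [/\ (0 < p)%nat, all (mem A) ls, all (mem A) lt,
  forall u, (p * (u \in e) + mult (map fst ls) u <= mult (map fst lt) u)%nat &
  r * INR p = wsum lt - wsum ls].

Lemma lower_le_upper r r' : lower_value r -> upper_value r' -> r <= r'.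
Proof.
move=> [a [ls1 [lt1 [a0 Als1 Alt1 mult1 sum1]]]] [b [ls2 [lt2 [b0 Als2 Alt2 mult2 sum2]]]].
have := hA (ls := flatten (nseq b ls1) ++ flatten (nseq a ls2))
           (lt := flatten (nseq b lt1) ++ flatten (nseq a lt2)).
rewrite !all_cat !all_flatten_nseq // !wsum_cat !wsum_flatten_nseq => /(_ isT isT) le_sum.
have {}le_sum : INR b * wsum ls1 + INR a * wsum ls2 <= INR b * wsum lt1 + INR a * wsum lt2.
  apply: le_sum => u; rewrite !map_cat !mult_cat !mult_flatten_nseq.
  by have := mult1 u; have := mult2 u; nia.
have ab0 : 0 < INR a * INR b by apply: Rmult_lt_0_compat; apply: lt_0_INR; lia.
apply: (Rmult_le_reg_l _ _ _ ab0).
have -> : INR a * INR b * r = INR b * (r * INR a) by ring.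
have -> : INR a * INR b * r' = INR a * (r' * INR b) by ring.
rewrite sum1 sum2; lra.
Qed.

Lemma lower_value0 : lower_value 0.
Proof. by exists 1%nat, [::], [::]; split => //; rewrite /wsum /=; lra. Qed.

Lemma upper_value1 : upper_value 1.
Proof.
exists 1%nat, [::], [:: (setT, 1)]; split => //=; first by rewrite (mem_set hAT).
  by move=> u; rewrite in_setT; case: (u \in e).
by rewrite /wsum /=; lra.
Qed.

Lemma le_sup_lower v p ls lt : (forall r, lower_value r -> r <= v) ->
  (0 < p)%nat -> all (mem A) ls -> all (mem A) lt ->
  (forall u, mult (map fst ls) u <= p * (u \in e) + mult (map fst lt) u)%nat ->
  wsum ls - wsum lt <= INR p * v.
Proof.
move=> v_ub p0 Als Alt le_mult; have := lt_0_INR p ltac:(lia) => pos_p.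
have /v_ub : lower_value ((wsum ls - wsum lt) / INR p).
  by exists p, ls, lt; split => //; field; lra.
move=> le_v; have -> : wsum ls - wsum lt = (wsum ls - wsum lt) / INR p * INR p by field; lra.
nra.
Qed.

Lemma ge_inf_upper v p ls lt : (forall r, upper_value r -> v <= r) ->
  (0 < p)%nat -> all (mem A) ls -> all (mem A) lt ->
  (forall u, p * (u \in e) + mult (map fst ls) u <= mult (map fst lt) u)%nat ->
  INR p * v <= wsum lt - wsum ls.
Proof.
move=> v_lb p0 Als Alt le_mult; have := lt_0_INR p ltac:(lia) => pos_p.
have /v_lb : upper_value ((wsum lt - wsum ls) / INR p).
  by exists p, ls, lt; split => //; field; lra.
move=> le_v; have -> : wsum lt - wsum ls = (wsum lt - wsum ls) / INR p * INR p by field; lra.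
nra.
Qed.

Lemma split_copies v ls : all (mem (A `|` [set (e, v)])) ls ->
  exists p ls0, [/\ all (mem A) ls0,
    forall u, mult (map fst ls) u = (p * (u \in e) + mult (map fst ls0) u)%nat &
    wsum ls = INR p * v + wsum ls0].
Proof.
elim: ls => [_|x ls IH /andP [/set_mem Ax /IH [p [ls0 [Als0 mult_ls sum_ls]]]]].
  by exists 0%nat, [::]; split => //=; rewrite /wsum /=; lra.
case: Ax => [Ax|->].
- exists p, (x :: ls0); split; first by rewrite /= (mem_set Ax).
    by move=> u /=; rewrite mult_ls; lia.
  by rewrite !wsum_cons sum_ls; lra.
- exists p.+1, ls0; split => //; first by move=> u; rewrite /= mult_ls; lia.
  by rewrite wsum_cons sum_ls S_INR /=; lra.
Qed.

Lemma horn_tarski_extend1 : exists v, horn_tarski (A `|` [set (e, v)]).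
Proof.
have lower_bounded : bound lower_value.
  by exists 1 => r /lower_le_upper; apply; exact: upper_value1.
have [v [v_ub v_lub]] := @completeness _ lower_bounded (ex_intro _ 0 lower_value0).
have v_lb r : upper_value r -> v <= r.
  by move=> up_r; apply: v_lub => r' /lower_le_upper; apply.
exists v => ls lt /split_copies [p [ls0 [Als0 mult_ls sum_ls]]].
move=> /split_copies [q [lt0 [Alt0 mult_lt sum_lt]]] le_mult.
rewrite sum_ls sum_lt.
have {}le_mult u :
  (p * (u \in e) + mult (map fst ls0) u <= q * (u \in e) + mult (map fst lt0) u)%nat.
  by rewrite -mult_ls -mult_lt.
case: (ltngtP p q) => [lt_pq|lt_qp|eq_pq]; last subst q.
- have le_mult0 u : (mult (map fst ls0) u <= (q - p) * (u \in e) + mult (map fst lt0) u)%nat.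
    by have := le_mult u; nia.
  have := le_sup_lower v_ub (ltac:(lia) : (0 < q - p)%nat) Als0 Alt0 le_mult0.
  by rewrite minus_INR; [nra | lia].
- have le_mult0 u : ((p - q) * (u \in e) + mult (map fst ls0) u <= mult (map fst lt0) u)%nat.
    by have := le_mult u; nia.
  have := ge_inf_upper v_lb (ltac:(lia) : (0 < p - q)%nat) Als0 Alt0 le_mult0.
  by rewrite minus_INR; [nra | lia].
- suff : wsum ls0 <= wsum lt0 by lra.
  by apply: hA => // u; have := le_mult u; lia.
Qed.

End OneStepExtension.

Section MaximalExtension.
Variable U : Type.
Implicit Types (G H : set (set U * R)) (F : set (set (set U * R))).

Lemma sub_all_set (T : Type) (A A' : set T) s : A `<=` A' -> all (mem A) s -> all (mem A') s.
Proof. by move=> AA'; apply: sub_all => x /set_mem /AA' /mem_set. Qed.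

Lemma all_chainU F G ls : total_on F subset -> all (mem (\bigcup_(H in F) H `|` G)) ls ->
  exists2 H, F H \/ H = set0 & all (mem (H `|` G)) ls.
Proof.
move=> Ftot; elim: ls => [|x ls IH]; first by exists set0; [right|].
case/andP => /set_mem Fx /IH [H FH ls_in].
have add_x H' : (H' `|` G) x -> H `|` G `<=` H' `|` G -> all (mem (H' `|` G)) (x :: ls).
  by move=> xH' sub; rewrite /= (mem_set xH') (sub_all_set sub ls_in).
case: Fx => [[H' FH' xH']|Gx]; last by exists H => //; apply: add_x; [right|].
have xH'G : (H' `|` G) x by left.
case: FH => [FH|H0].
- case: (Ftot _ _ FH FH') => [HH'|H'H].
    by exists H'; [left | apply: add_x => //; apply: setSU].
  by exists H; [left | apply: add_x => //; move: xH'G; apply: setSU].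
- by exists H'; [left | apply: add_x => //; rewrite H0 set0U; apply: subsetUr].
Qed.

Lemma horn_tarski_maximal G : horn_tarski G ->
  exists H, [/\ G `<=` H, horn_tarski H & forall x, horn_tarski (H `|` [set x]) -> H x].
Proof.
move=> hG.
have [H0 [hH0 H0max]] : exists H0, horn_tarski (H0 `|` G) /\
    forall H, H0 `<` H -> ~ horn_tarski (H `|` G).
  apply: Zorn_bigcup => F FP Ftot ls lt ls_in lt_in.
  have ls_lt_in : all (mem (\bigcup_(H in F) H `|` G)) (ls ++ lt) by rewrite all_cat ls_in.
  have [H FH] := all_chainU Ftot ls_lt_in; rewrite all_cat => /andP [ls_in' lt_in'].
  have hHG : horn_tarski (H `|` G) by case: FH => [/FP|->] //; rewrite set0U.
  exact: hHG _ _ ls_in' lt_in'.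
exists (H0 `|` G); split => // x hx; apply: contrapT => nx.
apply: (H0max (H0 `|` [set x])).
  split; first exact: subsetUl.
  by move=> sub; apply: nx; left; apply: sub; right.
by rewrite setUAC.
Qed.

Lemma horn_tarski_functional H X v w : horn_tarski H -> H (X, v) -> H (X, w) -> v = w.
Proof.
move=> hH Hv Hw.
have one_side a b : H (X, a) -> H (X, b) -> a <= b.
  move=> Ha Hb; have := hH [:: (X, a)] [:: (X, b)].
  by rewrite /= (mem_set Ha) (mem_set Hb) /wsum /= => /(_ isT isT (fun u => leqnn _)); lra.
by apply: Rle_antisym; apply: one_side.
Qed.

End MaximalExtension.

Theorem content_extension (U : Type) (B1 B2 : set (set U)) (m1 m2 : set U -> R) :
  set_algebra B1 -> set_algebra B2 -> prob_content B1 m1 -> prob_content B2 m2 ->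
  (forall X Y, B1 X -> B2 Y -> X `<=` Y -> m1 X <= m2 Y) ->
  exists m, [/\ prob_content setT m, forall X, B1 X -> m X = m1 X & forall X, B2 X -> m X = m2 X].
Proof.
move=> hB1 hB2 hm1 hm2 compat.
have [H [GH hH Hmax]] := horn_tarski_maximal (horn_tarski_graphU hB1 hB2 hm1 hm2 compat).
have HT1 : H (setT, 1) by apply: GH; left; split; [exact: set_algebraT | by case: hm1].
have Htot X : exists v, H (X, v).
  by have [v /Hmax] := horn_tarski_extend1 X hH HT1; exists v.
pose m X := proj1_sig (cid (Htot X)).
have Hm X : H (X, m X) := proj2_sig (cid (Htot X)).
have m_graph X v : H (X, v) -> m X = v := horn_tarski_functional hH (Hm X).
exists m; split; last 2 first.
- by move=> X BX; apply: m_graph; apply: GH; left.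
- by move=> X BX; apply: m_graph; apply: GH; right.
split; first exact: m_graph.
  move=> X _; have := hH [::] [:: (X, m X)].
  by rewrite /= (mem_set (Hm X)) /wsum /= => /(_ isT isT (fun u => leq0n _)); lra.
move=> X Y _ _ XY0.
have same_mult u : mult [:: X `|` Y] u = mult [:: X; Y] u.
  rewrite /mult /= in_setU; case: (boolP (u \in X)) => [/set_mem Xu|_] //=.
  case: (boolP (u \in Y)) => [/set_mem Yu|_] //=.
  by have : (X `&` Y) u by []; rewrite XY0.
have in1 : all (mem H) [:: (X `|` Y, m (X `|` Y))] by rewrite /= (mem_set (Hm _)).
have in2 : all (mem H) [:: (X, m X); (Y, m Y)] by rewrite /= !(mem_set (Hm _)).
have := hH _ _ in1 in2 (fun u => eq_leq (same_mult u)).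
have := hH _ _ in2 in1 (fun u => eq_leq (esym (same_mult u))).
rewrite /wsum /=; lra.
Qed.

(** * Push-forward of Keisler measures *)

Section ImageContent.
Variables (U V : Type) (g : U -> V) (B : set (set V)) (mu : set V -> R).
Hypotheses (hB : set_algebra B) (hmu : prob_content B mu).
Hypotheses (B_range : B (range g)) (mu_range : mu (range g) = 1).

Lemma image_preimage_setI (Z : set V) : g @` (g @^-1` Z) = Z `&` range g.
Proof.
apply/seteqP; split=> [_ [u Zgu <-]|v [Zv [u _ guv]]]; first by split=> //; exists u.
by exists u => //; rewrite /preimage /= guv.
Qed.

Lemma set_algebra_preimage : set_algebra [set g @^-1` Z | Z in B].
Proof.
split; first by exists setT; [exact: set_algebraT hB | exact: preimage_setT].
  by move=> _ [Z BZ <-]; exists (~` Z); [exact: set_algebraC hB _ BZ | rewrite preimage_setC].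
move=> _ _ [Z BZ <-] [Z' BZ' <-]; exists (Z `&` Z'); last by rewrite preimage_setI.
exact: (set_algebraI hB BZ BZ').
Qed.

Lemma image_content_preimage Z : B Z -> mu (g @` (g @^-1` Z)) = mu Z.
Proof. by move=> BZ; rewrite image_preimage_setI (content_setI_full hB hmu). Qed.

Lemma prob_content_image : prob_content [set g @^-1` Z | Z in B] (fun b => mu (g @` b)).
Proof.
have [_ mu0 muU] := hmu.
split; first exact: mu_range.
  by move=> _ [Z BZ <-]; rewrite image_content_preimage //; exact: mu0.
move=> _ _ [Z BZ <-] [Z' BZ' <-] disj.
rewrite -preimage_setU !image_content_preimage //; last exact: (set_algebraU hB BZ BZ').
rewrite -(content_setI_full hB hmu (set_algebraU hB BZ BZ') B_range) // setIUl.
rewrite muU ?(content_setI_full hB hmu) //; try exact: (set_algebraI hB _ B_range).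
apply/disjoints_subset => v [Zv [u _ guv]] [Z'v _].
have : (g @^-1` Z `&` g @^-1` Z') u by rewrite /preimage /= guv.
by rewrite disj.
Qed.

End ImageContent.

Lemma prob_content_preimage (U V : Type) (g : U -> V) (w : set U -> R) :
  prob_content setT w -> prob_content setT (fun Z => w (g @^-1` Z)).
Proof.
case=> wT w0 wU; split=> [|Z _|Z Z' _ _ disj]; first by rewrite preimage_setT.
  exact: w0.
by rewrite preimage_setU wU // -preimage_setI disj preimage_set0.
Qed.

Section KeislerContents.
Variables (L : signature) (M : structure L) (n : nat).
Implicit Types (A : set M) (mu : set ('I_n -> M) -> R).

Lemma set_algebra_definable A : set_algebra (@definable L M n A).
Proof. by split; [exact: definableT | exact: definableC | exact: definableI]. Qed.

Lemma keisler_prob_content A mu : keisler A mu -> prob_content (definable A) mu.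
Proof.
case=> mu0 [muT [_ muU]]; split=> // X Y dX dY disj; apply: muU => // a XYa.
by have : (X `&` Y) a by []; rewrite disj.
Qed.

Lemma prob_content_keisler A mu : prob_content setT mu -> keisler A mu.
Proof.
case=> muT mu0 muU; split; first by move=> X _; exact: mu0.
split=> //; split; first by move=> X Y _ _ XY; congr mu; apply/predeqP.
move=> X Y _ _ disj; apply: muU => //.
by apply/disjoints_subset => a Xa Ya; apply: (disj a).
Qed.

Lemma keisler_inhabited A mu : keisler A mu -> inhabited ('I_n -> M).
Proof.
move=> /keisler_prob_content mu_content; apply: contrapT => empty.
have setT0 : @setT ('I_n -> M) = set0 by apply/seteqP; split=> // a; case: empty.
have [muT _ _] := mu_content; have := content0 (set_algebra_definable A) mu_content.
by rewrite -setT0 muT; lra.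
Qed.

End KeislerContents.

Section Cylinders.
Variables (L : signature) (M : structure L) (n m : nat) (C : set M).

Lemma definable_cylx (X : set ('I_n -> M)) : definable C X -> definable C (@cylx L M n m X).
Proof. exact: definable_reindex (@lshift_inj n m). Qed.

Lemma definable_cyly (Y : set ('I_m -> M)) : definable C Y -> definable C (@cyly L M n m Y).
Proof. exact: definable_reindex (@rshift_inj n m). Qed.

Lemma definable_xpart_image (D : set ('I_(n + m) -> M)) :
  definable C D -> definable C (@xpart L M n m @` D).
Proof.
move=> /definable_exists; congr definable; apply/seteqP; split=> x /=.
  by case=> y Dxy; exists (join x y); rewrite ?xpart_join.
by case=> a Da <-; exists (ypart a); rewrite join_parts.
Qed.

Lemma range_xpart : inhabited ('I_m -> M) -> range (@xpart L M n m) = setT.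
Proof. by case=> y0; apply/seteqP; split=> // x _; exists (join x y0); rewrite ?xpart_join. Qed.

End Cylinders.

Section ExtendOverCylinders.
Variables (L : signature) (M : structure L) (n m : nat) (A : set M).
Variables (mu : set ('I_n -> M) -> R) (lam : set ('I_(n + m) -> M) -> R).
Local Notation setTM := (@setTM L M).
Local Notation px := (@xpart L M n m).

Lemma extend_over_cylinders :
  inhabited ('I_m -> M) -> keisler setTM mu -> keisler A lam ->
  (forall X, definable A X -> lam (cylx X) = mu X) ->
  exists w0, [/\ prob_content setT w0, forall D, definable A D -> w0 D = lam D &
                 forall X, definable setTM X -> w0 (cylx X) = mu X].
Proof.
move=> inh hmu hlam lam_cyl.
have hBx := @set_algebra_definable L M n setTM; have hmux := keisler_prob_content hmu.
have hBxy := @set_algebra_definable L M (n + m) A; have hlamxy := keisler_prob_content hlam.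
have B_range : definable setTM (range px) by rewrite range_xpart //; exact: definableT.
have mu_range : mu (range px) = 1 by rewrite range_xpart //; case: hmux.
have image_cyl X : definable setTM X -> mu (px @` (px @^-1` X)) = mu X.
  exact: (image_content_preimage hBx hmux B_range mu_range (Z := X)).
have [|w0 [hw0 w0_lam w0_cyl]] := content_extension hBxy (set_algebra_preimage px hBx)
  hlamxy (prob_content_image hBx hmux B_range mu_range).
  move=> D _ dD [X dX <-] DX; rewrite image_cyl //.
  have dpD : definable A (px @` D) := definable_xpart_image dD.
  apply: (Rle_trans _ (lam (cylx (px @` D)))).
    by apply: (le_content hBxy hlamxy dD (definable_cylx m dpD)) => a Da; exists a.
  rewrite lam_cyl //; apply: (le_content hBx hmux (definableS (subsetT A) dpD) dX).
  by move=> _ [a Da <-]; exact: DX.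
exists w0; split => // X dX; rewrite -[cylx X]/(px @^-1` X) w0_cyl; last by exists X.
exact: image_cyl.
Qed.

End ExtendOverCylinders.

Section Pushforward.
Variables (L : signature) (M : structure L) (n m k : nat) (f : ('I_m -> M) -> ('I_k -> M)).
Local Notation setTM := (@setTM L M).

Definition fun_graph : set ('I_(m + k) -> M) := [set a | forall j, f (xpart a) j = ypart a j].

Definition id_times (a : 'I_(n + m) -> M) : 'I_(n + k) -> M := join (xpart a) (f (ypart a)).

Lemma fun_graph_join y z : fun_graph (join y z) <-> f y = z.
Proof. by rewrite /fun_graph /= xpart_join ypart_join; split=> [?|<-] //; exact: funext. Qed.

Lemma preimage_id_times_cylx X : id_times @^-1` (@cylx L M n k X) = cylx X.
Proof. by rewrite /id_times /preimage /cylx /=; apply/seteqP; split=> a; rewrite /= xpart_join. Qed.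

Lemma preimage_id_times_cyly W : id_times @^-1` (@cyly L M n k W) = cyly [set y | W (f y)].
Proof. by rewrite /id_times /preimage /cyly /=; apply/seteqP; split=> a; rewrite /= ypart_join. Qed.

Section Definable.
Variable C : set M.
Hypothesis graphC : definable C fun_graph.

Lemma definable_preimage_fun W : definable C W -> definable C [set y | W (f y)].
Proof.
move=> dW; move/definable_exists: (definableI graphC (definable_cyly m dW)).
congr definable; apply/seteqP; split=> y /=.
  by case=> z [/fun_graph_join <-]; rewrite /cyly ypart_join.
by move=> Wfy; exists (f y); split; [exact/fun_graph_join | rewrite /cyly ypart_join].
Qed.

Lemma definable_image_id_times D : definable C D -> definable C (id_times @` D).
Proof.
move=> dD.
(* In [(x, z, y)], [s1] picks [(x, y)] and [s2] picks [(y, z)]. *)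
pose s1 : 'I_(n + m) -> 'I_(n + k + m) := join (lshift m \o lshift k) (@rshift (n + k) m).
pose s2 : 'I_(m + k) -> 'I_(n + k + m) := join (@rshift (n + k) m) (lshift m \o @rshift n k).
have s1_inj : injective s1.
  apply: join_inj; [exact/inj_comp/lshift_inj/lshift_inj | exact: rshift_inj |].
  by move=> i j /(congr1 val) /=; have := ltn_ord i; lia.
have s2_inj : injective s2.
  apply: join_inj; [exact: rshift_inj | exact/inj_comp/rshift_inj/lshift_inj |].
  by move=> i j /(congr1 val) /=; have := ltn_ord j; lia.
have s1E (c : 'I_(n + k) -> M) y : join c y \o s1 = join (xpart c) y.
  by rewrite join_comp compA join_compl join_compr.
have s2E (c : 'I_(n + k) -> M) y : join c y \o s2 = join y (ypart c).
  by rewrite join_comp compA join_compl join_compr.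
move/definable_exists: (definableI (definable_reindex s1_inj dD) (definable_reindex s2_inj graphC)).
congr definable; apply/seteqP; split=> c /=.
  case=> y []; rewrite s1E s2E => Dxy /fun_graph_join fy.
  by exists (join (xpart c) y) => //; rewrite /id_times xpart_join ypart_join fy join_parts.
case=> a Da <-; exists (ypart a); rewrite s1E s2E /id_times xpart_join ypart_join join_parts.
by split => //; exact/fun_graph_join.
Qed.

End Definable.
End Pushforward.

Section KeislerGePushforward.
Variables (L : signature) (M : structure L) (n m k : nat) (f : ('I_m -> M) -> ('I_k -> M)).
Variables (A A' : set M) (mu : set ('I_n -> M) -> R) (nu : set ('I_m -> M) -> R).
Variables (lam w0 : set ('I_(n + m) -> M) -> R).
Local Notation setTM := (@setTM L M).
Local Notation g := (@id_times L M n m k f).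

Hypotheses (AA' : A `<=` A') (graphA' : definable A' (fun_graph f)).
Hypothesis hlam : keisler A lam.
Hypothesis lam_ge : forall om, keisler setTM om -> (forall Z, definable A Z -> om Z = lam Z) ->
  (forall X, definable setTM X -> om (cylx X) = mu X) ->
  forall Y, definable setTM Y -> om (cyly Y) = nu Y.
Hypotheses (hw0 : prob_content setT w0) (w0_lam : forall D, definable A D -> w0 D = lam D).
Hypothesis w0_cyl : forall X, definable setTM X -> w0 (cylx X) = mu X.

Lemma pushforward_determined (w' : set ('I_(n + k) -> M) -> R) :
  keisler setTM w' -> (forall Z, definable A' Z -> w' Z = w0 (g @^-1` Z)) ->
  (forall X, definable setTM X -> w' (cylx X) = mu X) ->
  forall W, definable setTM W -> w' (cyly W) = pushforward f nu W.
Proof.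
move=> hw' w'_w0 w'_cyl W dW.
have hBz := @set_algebra_definable L M (n + k) setTM; have hw'c := keisler_prob_content hw'.
have graphT : definable setTM (fun_graph f) := definableS (subsetT _) graphA'.
have dg D : definable A D -> definable A' (g @` D).
  by move=> dD; exact/(definable_image_id_times graphA')/(definableS AA').
have B_range : definable setTM (range g) by apply: definableS (subsetT _) (dg _ (definableT _ _)).
have w'_range : w' (range g) = 1.
  by rewrite w'_w0 ?preimage_range; [case: hw0 | exact: dg (definableT _ _)].
have image_w' Z : definable setTM Z -> w' (g @` (g @^-1` Z)) = w' Z.
  exact: (image_content_preimage hBz hw'c B_range w'_range (Z := Z)).
have [|w [hw w_lam w_pre]] := content_extension (set_algebra_definable _ A)
  (set_algebra_preimage g hBz) (keisler_prob_content hlam)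
  (prob_content_image hBz hw'c B_range w'_range).
  move=> D _ dD [Z dZ <-] DZ; rewrite image_w' // -w0_lam //.
  apply: (Rle_trans _ (w0 (g @^-1` (g @` D)))).
    exact: (le_content (set_algebra_setT _) hw0 I I (@preimage_image _ _ g D)).
  rewrite -w'_w0; last exact: dg.
  apply: (le_content hBz hw'c (definableS (subsetT _) (dg _ dD)) dZ).
  by move=> _ [a Da <-]; exact: DZ.
have w_g Z : definable setTM Z -> w (g @^-1` Z) = w' Z.
  by move=> dZ; rewrite w_pre ?image_w' //; exists Z.
have w_cyl X : definable setTM X -> w (cylx X) = mu X.
  by move=> dX; rewrite -(preimage_id_times_cylx f) w_g ?w'_cyl //; exact: definable_cylx.
apply: eq_trans (lam_ge (prob_content_keisler _ hw) w_lam w_cyl (definable_preimage_fun graphT dW)).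
by rewrite -preimage_id_times_cyly w_g //; exact: definable_cyly.
Qed.

Lemma keisler_ge_at_pushforward : keisler_ge_at A' mu (pushforward f nu).
Proof.
exists (fun Z => w0 (g @^-1` Z)); split; first exact/prob_content_keisler/prob_content_preimage.
split; last exact: pushforward_determined.
by move=> X dX; rewrite preimage_id_times_cylx; apply: w0_cyl; exact: definableS (subsetT _) dX.
Qed.

End KeislerGePushforward.

Theorem corollary3p14 (L : signature) (M : structure L) (K : Type)
    (HM : monster M K) (n m k : nat)
    (mu : (('I_n -> M) -> Prop) -> R) (nu : (('I_m -> M) -> Prop) -> R)
    (f : ('I_m -> M) -> ('I_k -> M)) :
  keisler (@setTM L M) mu -> keisler (@setTM L M) nu -> definable_map f ->
  keisler_ge K mu nu -> keisler_ge K mu (pushforward f nu).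
Proof.
move=> hmu hnu [phi [_ phi_graph]] [A [sA [lam [hlam [lam_cyl lam_ge]]]]].
pose A' := A `|` [set p | List.In p (fparams phi)].
have graphA' : definable A' (fun_graph f).
  by exists phi; split => //; apply: fparams_inS (fparams_in_fparams phi) => p; right.
have [w0 [hw0 w0_lam w0_cyl]] := extend_over_cylinders (keisler_inhabited hnu) hmu hlam lam_cyl.
exists A'; split; first by case: HM => K_inf _; exact: small_setU_seq.
exact: keisler_ge_at_pushforward (@subsetUl _ A _) graphA' hlam lam_ge hw0 w0_lam w0_cyl.
Qed.
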